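(* Fix $N$ and $T$, and assume that for every $t\in[0,T_N)_N$ and $x\in\mathbf R^n$, $H^N(t+N^{-1},x)$ is invertible, every component of $h^N(t,x)H^N(t+N^{-1},x)^{-1}$ is strictly positive, and the sum $A^N(t,x)$ of these components satisfies $A^N(t,x)<1$. Let $\Psi^N:\mathbf R^n\to\mathbf R$ and $g^N:(0,T_N]_N\times\mathbf R^n\to\mathbf R$ be bounded, and let $u^N:[0,T_N]_N\times\mathbf R^n\to\mathbf R$ satisfy $u^N(T_N,\cdot)=\Psi^N$ and $$\partial^N_tu^N+\tfrac12\Delta^Nu^N-\langle b^N,\nabla^Nu^N\rangle-c^N(1^Nu^N)=g^N\quad\text{on }(0,T_N]_N\times\mathbf R^n.$$ Then for every $t\in[0,T_N]_N$, $$\sup_{x\in\mathbf R^n}|u^N(t,x)|\le\sup_{y}|\Psi^N(y)|+(T_N-t)\sup_{s\in(t,T_N]_N,\,y\in\mathbf R^n}|g^N(s,y)|.$$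
   Context: Fix $n\ge1$ and a real orthogonal $(n+1)\times(n+1)$ matrix $(e_{i,j})_{0\le i,j\le n}$ with $e_{0,j}>0$ for all $j$; put $e_j=\frac{1}{e_{0,j}}(e_{1,j},\dots,e_{n,j})\in\mathbf R^n$. For $N\in\mathbf N$, $T_N=[TN]/N$ and, for an interval $I\subset[0,\infty)$, $I_N=I\cap\{k/N:k\in\mathbf Z_{\ge0}\}$. Difference operators (acting on functions of $(t,x)$, componentwise on vectors): $\partial^N_kf(t,x)=\sqrt N\sum_{j=0}^nf(t,x+N^{-1/2}e_j)e_{0,j}e_{k,j}$ ($k=1,\dots,n$), $\nabla^N=(\partial^N_1,\dots,\partial^N_n)$, $\Delta^Nf(t,x)=2N\sum_{j=0}^n\{f(t,x+N^{-1/2}e_j)-f(t,x)\}e_{0,j}^2$, $\partial^N_tf(t,x)=N(f(t,x)-f(t-N^{-1},x))$, $1^Nf(t,x)=f(t-N^{-1},x)$. Market data: functions $h^{i,N}:[0,T]_N\times\mathbf R^n\to\mathbf R$, $i=0,\dots,n$, forming the row vector $h^N=(h^{0,N},\dots,h^{n,N})$; $H^N(t,x)$ is the $(n+1)\times(n+1)$ matrix whose entry in row $j$, column $i$ is $h^{i,N}(t,x+N^{-1/2}e_j)$. $\Sigma^N(t,x)$ is the $(n+1)\times(n+1)$ matrix whose first row is $(h^{0,N}(t-N^{-1},x),\dots,h^{n,N}(t-N^{-1},x))$ and whose row $k$ ($k=1,\dots,n$) is $(\partial^N_kh^{0,N}(t,x),\dots,\partial^N_kh^{n,N}(t,x))$;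 under the stated assumptions it is invertible for $t\in(0,T_N]_N$. $(c^N(t,x),b^N(t,x)):=\big(\partial^N_th^N+\tfrac12\Delta^Nh^N\big)(t,x)[\Sigma^N(t,x)]^{-1}\in\mathbf R^{1+n}$, $c^N$ being the first entry and $b^N\in\mathbf R^n$ the rest. *)

From HB Require Import structures.
From mathcomp Require Import all_boot all_order all_algebra.
From mathcomp Require Import all_classical all_reals.
Set Implicit Arguments. Unset Strict Implicit. Unset Printing Implicit Defensive.
Import Order.TTheory GRing.Theory Num.Theory.
Local Open Scope ring_scope.
Local Open Scope classical_set_scope.

Section Defs.
Variable R : realType.
Variable n : nat.
(* E : the orthogonal matrix (e_{i,j})_{0<=i,j<=n}; row/column 0 is ord0 *)
Variable E : 'M[R]_(n.+1).
Variable N : nat.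

Definition orthogonal_mx (M : 'M[R]_(n.+1)) : Prop := M *m M^T = 1%:M.

Definition evec (j : 'I_n.+1) : 'rV[R]_n :=
  \row_(k < n) (E (lift ord0 k) j / E ord0 j).

Definition shiftN (x : 'rV[R]_n) (j : 'I_n.+1) : 'rV[R]_n :=
  x + (Num.sqrt (N%:R))^-1 *: evec j.

Definition TN (T : R) : R := (Num.floor (T * N%:R))%:~R / N%:R.

Definition on_grid (t : R) : Prop := exists k : nat, t = k%:R / N%:R.

(* difference operators acting on f : time -> space -> R;
   k : 'I_n.+1 is the row index of E, used with k = 1..n *)
Definition dN (k : 'I_n.+1) (f : R -> 'rV[R]_n -> R) (t : R) (x : 'rV[R]_n) : R :=
  Num.sqrt (N%:R) * \sum_(j < n.+1) f t (shiftN x j) * E ord0 j * E k j.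

Definition gradN (f : R -> 'rV[R]_n -> R) (t : R) (x : 'rV[R]_n) : 'rV[R]_n :=
  \row_(i < n) dN (lift ord0 i) f t x.

Definition lapN (f : R -> 'rV[R]_n -> R) (t : R) (x : 'rV[R]_n) : R :=
  2 * N%:R * \sum_(j < n.+1) (f t (shiftN x j) - f t x) * (E ord0 j) ^+ 2.

Definition dtN (f : R -> 'rV[R]_n -> R) (t : R) (x : 'rV[R]_n) : R :=
  N%:R * (f t x - f (t - N%:R^-1) x).

Definition oneN (f : R -> 'rV[R]_n -> R) (t : R) (x : 'rV[R]_n) : R :=
  f (t - N%:R^-1) x.

Variable h : R -> 'rV[R]_n -> 'rV[R]_(n.+1).

Definition hcomp (i : 'I_n.+1) : R -> 'rV[R]_n -> R := fun t x => h t x 0 i.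

Definition Hmx (t : R) (x : 'rV[R]_n) : 'M[R]_(n.+1) :=
  \matrix_(j, i) h t (shiftN x j) 0 i.

Definition Sigmamx (t : R) (x : 'rV[R]_n) : 'M[R]_(n.+1) :=
  \matrix_(r, i) (if r == ord0 then h (t - N%:R^-1) x 0 i
                  else dN r (hcomp i) t x).

Definition cbN (t : R) (x : 'rV[R]_n) : 'rV[R]_(n.+1) :=
  (\row_(i < n.+1) (dtN (hcomp i) t x + 2^-1 * lapN (hcomp i) t x))
    *m invmx (Sigmamx t x).

Definition cN (t : R) (x : 'rV[R]_n) : R := cbN t x 0 ord0.
Definition bN (t : R) (x : 'rV[R]_n) : 'rV[R]_n := \row_(i < n) cbN t x 0 (lift ord0 i).

End Defs.

From HB Require Import structures.
From mathcomp Require Import all_boot all_order all_algebra.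
From mathcomp Require Import all_classical all_reals.
From mathcomp Require Import ring.
Import Order.TTheory GRing.Theory Num.Theory.
Set Implicit Arguments. Unset Strict Implicit. Unset Printing Implicit Defensive.
Local Open Scope ring_scope.
Local Open Scope classical_set_scope.

(* The coefficients (c, b) are chosen so that the operator
   L f = d_t f + 1/2 Delta f - <b, grad f> - c (1 f) annihilates every component of h.
   Written out, L f (t + 1/N, x) = sum_j w_j f (t + 1/N, x + N^-1/2 e_j) - (N + c) f (t, x),
   where the weights w_j add up to N because E is orthogonal.  Applied to the components of h
   and combined with the invertibility of H, this gives w = (N + c) q with q = h H^-1, so the
   equation L u = g becomes the explicit scheme
     u (t, x) = sum_j q_j u (t + 1/N, x + N^-1/2 e_j) - (sum_j q_j) g (t + 1/N, x) / N.
   Since q_j > 0 and sum_j q_j < 1 this is a sub-stochastic average, and backward induction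
   from T_N gives the bound.  That (c, b) is well defined at all rests on the factorisation
   Sigma = M H, where M has first row q and is invertible by positivity of q and orthogonality. *)

Lemma normr_substochastic_le (R : numDomainType) (m : nat) (q a : 'I_m.+1 -> R) (d B D : R) :
  (forall j, 0 <= q j) -> \sum_j q j <= 1 -> (forall j, `|a j| <= B) -> `|d| <= D ->
  `|\sum_j q j * a j - (\sum_j q j) * d| <= B + D.
Proof.
move=> q_ge0 q_le1 a_le d_le.
have A_ge0 : 0 <= \sum_j q j by apply: sumr_ge0.
have BD_ge0 : 0 <= B + D.
  by apply: addr_ge0; [apply: le_trans (a_le ord0) | apply: le_trans d_le].
apply: le_trans (ler_normB _ _) _; apply: le_trans (ler_piMl BD_ge0 q_le1).
rewrite mulrDr lerD //.
  apply: le_trans (ler_norm_sum _ _ _) _; rewrite mulr_suml; apply: ler_sum => j _.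
  by rewrite normrM ger0_norm // ler_wpM2l.
by rewrite normrM ger0_norm // ler_wpM2l.
Qed.

Lemma backward_induction_le (R : numDomainType) (T : Type) (V : nat -> T -> R)
    (P D : R) (k0 K : nat) :
  (forall x, V K x <= P) ->
  (forall k B, (k0 <= k < K)%N -> (forall y, V k.+1 y <= B) -> forall x, V k x <= B + D) ->
  forall k x, (k0 <= k <= K)%N -> V k x <= P + (K - k)%:R * D.
Proof.
move=> VK Vstep k x /andP[k0_le_k k_le_K].
suff bound m : forall k, (k0 <= k)%N -> (k + m = K)%N -> forall x, V k x <= P + m%:R * D.
  by apply: bound => //; rewrite subnKC.
elim: m => [|m IHm] {k k0_le_k k_le_K} k k0_le_k km {}x.
  by move: km; rewrite addn0 mul0r addr0 => ->.
rewrite -natr1 mulrDl mul1r addrA; apply: Vstep => [|y].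
  by rewrite k0_le_k -km -addSnnS leq_addr.
by apply: IHm; [apply: leqW | rewrite addSnnS].
Qed.

Lemma ler_grid (R : numFieldType) (N k m : nat) :
  (0 < N)%N -> (k%:R / N%:R <= m%:R / N%:R :> R) = (k <= m)%N.
Proof. by move=> N_gt0; rewrite ler_pM2r ?invr_gt0 ?ltr0n // ler_nat. Qed.

Lemma ltr_grid (R : numFieldType) (N k m : nat) :
  (0 < N)%N -> (k%:R / N%:R < m%:R / N%:R :> R) = (k < m)%N.
Proof. by move=> N_gt0; rewrite ltr_pM2r ?invr_gt0 ?ltr0n // ltr_nat. Qed.

Lemma grid_succ (R : numFieldType) (N k : nat) :
  k%:R / N%:R + N%:R^-1 = k.+1%:R / N%:R :> R.
Proof. by rewrite -natr1 mulrDl mul1r. Qed.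

Lemma TN_on_grid (R : realType) (N : nat) (T : R) :
  (0 < N)%N -> 0 <= TN N T -> exists K : nat, TN N T = K%:R / N%:R.
Proof.
rewrite /TN => N_gt0; case: (Num.floor _) => [K|K] TN_ge0; first by exists K.
suff : (Negz K)%:~R / N%:R < 0 :> R by rewrite ltNge TN_ge0.
by rewrite pmulr_llt0 ?invr_gt0 ?ltr0n // ltrz0.
Qed.

Section Stencil.
Variables (R : realType) (n : nat) (E : 'M[R]_n.+1) (N : nat).
Hypothesis E_orth : orthogonal_mx E.

Lemma orthogonal_mx_dot r l : \sum_j E r j * E l j = (r == l)%:R.
Proof.
have := congr1 (fun M : 'M[R]_n.+1 => M r l) E_orth; rewrite !mxE => <-.
by apply: eq_bigr => j _; rewrite mxE.
Qed.

Lemma sum_row0_sqr : \sum_j E ord0 j ^+ 2 = 1.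
Proof.
have := orthogonal_mx_dot ord0 ord0; rewrite eqxx mulr1n => <-.
by apply: eq_bigr => j _; rewrite expr2.
Qed.

Lemma sum_row0_mul_lift_rows (v : 'I_n -> R) :
  \sum_j E ord0 j * \sum_(k < n) v k * E (lift ord0 k) j = 0.
Proof.
under eq_bigr => j _ do rewrite mulr_sumr.
rewrite exchange_big big1 // => k _.
have := orthogonal_mx_dot ord0 (lift ord0 k); rewrite (negbTE (neq_lift _ _)) mulr0n => Hk.
by under eq_bigr => j _ do rewrite mulrCA; rewrite -mulr_sumr Hk mulr0.
Qed.

Definition opN (b : 'rV[R]_n) (c : R) (f : R -> 'rV[R]_n -> R) (s : R) (x : 'rV[R]_n) :=
  dtN N f s x + 2^-1 * lapN E N f s x
  - \sum_(i < n) b 0 i * gradN E N f s x 0 i - c * oneN N f s x.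

Definition stencil_weight (b : 'rV[R]_n) (j : 'I_n.+1) : R :=
  N%:R * E ord0 j ^+ 2
  - Num.sqrt N%:R * (E ord0 j * \sum_(k < n) b 0 k * E (lift ord0 k) j).

Lemma sum_stencil_weight b : \sum_j stencil_weight b j = N%:R.
Proof.
by rewrite sumrB -!mulr_sumr sum_row0_sqr sum_row0_mul_lift_rows mulr0 mulr1 subr0.
Qed.

Lemma opN_stencil b c f t x :
  opN b c f (t + N%:R^-1) x
  = \sum_j stencil_weight b j * f (t + N%:R^-1) (shiftN E N x j) - (N%:R + c) * f t x.
Proof.
set s := t + N%:R^-1; set fs := fun j => f s (shiftN E N x j).
have lap : 2^-1 * lapN E N f s x = N%:R * \sum_j E ord0 j ^+ 2 * fs j - N%:R * f s x.
  rewrite /lapN mulrA mulrA mulVf ?pnatr_eq0 // mul1r -mulrBr; congr (_ * _).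
  rewrite -[X in _ - X]mul1r -sum_row0_sqr mulr_suml -sumrB.
  by apply: eq_bigr => j _; rewrite /fs; ring.
have grad : \sum_(i < n) b 0 i * gradN E N f s x 0 i
    = Num.sqrt N%:R * \sum_j (E ord0 j * \sum_(k < n) b 0 k * E (lift ord0 k) j) * fs j.
  rewrite mulr_sumr; under eq_bigr => i _ do rewrite /gradN /dN mxE mulr_sumr mulr_sumr.
  rewrite exchange_big; apply: eq_bigr => j _.
  rewrite [in RHS](mulrC (E ord0 j)) -[in RHS]mulrA [in RHS]mulr_suml [in RHS]mulr_sumr.
  by apply: eq_bigr => k _; rewrite /fs; ring.
have weights : \sum_j stencil_weight b j * fs j
    = N%:R * \sum_j E ord0 j ^+ 2 * fs j
      - Num.sqrt N%:R * \sum_j (E ord0 j * \sum_(k < n) b 0 k * E (lift ord0 k) j) * fs j.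
  by rewrite !mulr_sumr -sumrB; apply: eq_bigr => j _; rewrite /stencil_weight; ring.
by rewrite /opN /dtN /oneN /s addrK -/s lap grad weights; ring.
Qed.

Section Positivity.
Hypotheses (E0_gt0 : forall j, 0 < E ord0 j) (N_gt0 : (0 < N)%N).

Definition sigma_left_factor (q : 'rV[R]_n.+1) : 'M[R]_n.+1 :=
  \matrix_(r, j) if r == ord0 then q 0 j else Num.sqrt N%:R * (E ord0 j * E r j).

Lemma Sigmamx_factor h t x (q : 'rV[R]_n.+1) :
  h t x = q *m Hmx E N h (t + N%:R^-1) x ->
  Sigmamx E N h (t + N%:R^-1) x = sigma_left_factor q *m Hmx E N h (t + N%:R^-1) x.
Proof.
move=> hq; apply/matrixP => r i; rewrite !mxE.
have [-> | r_neq0] := eqVneq r ord0.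
  by rewrite addrK hq mxE; apply: eq_bigr => j _; rewrite !mxE.
rewrite /dN mulr_sumr; apply: eq_bigr => j _.
by rewrite !mxE /hcomp (negbTE r_neq0); ring.
Qed.

Lemma sigma_left_factor_unit (q : 'rV[R]_n.+1) :
  (forall i, 0 < q 0 i) -> sigma_left_factor q \in unitmx.
Proof.
move=> q_gt0; rewrite -row_free_unit; apply: inj_row_free => v vM0.
set v' := fun k : 'I_n => v 0 (lift ord0 k).
have sqrtN_gt0 : 0 < Num.sqrt (N%:R : R) by rewrite sqrtr_gt0 ltr0n.
have col_eq0 j : v 0 ord0 * q 0 j
    + Num.sqrt N%:R * (E ord0 j * \sum_(k < n) v' k * E (lift ord0 k) j) = 0.
  have := congr1 (fun A : 'rV_n.+1 => A 0 j) vM0; rewrite !mxE => vMj.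
  rewrite -[RHS]vMj big_ord_recl !mxE /= mulr_sumr mulr_sumr; congr (_ + _).
  by apply: eq_bigr => k _; rewrite !mxE /v' /=; ring.
have v0 : v 0 ord0 = 0.
  have : \sum_j (v 0 ord0 * q 0 j
      + Num.sqrt N%:R * (E ord0 j * \sum_(k < n) v' k * E (lift ord0 k) j)) = 0.
    by rewrite big1.
  rewrite big_split /= -!mulr_sumr sum_row0_mul_lift_rows // mulr0 addr0 => /eqP.
  rewrite mulf_eq0 => /orP [/eqP // | ]; rewrite gt_eqF //.
  by rewrite (bigD1 ord0) //= ltr_pwDl ?q_gt0 ?sumr_ge0 // => i _; apply: ltW.
have vE0 : v *m E = 0.
  apply/rowP => j; rewrite !mxE big_ord_recl v0 mul0r add0r.
  have := col_eq0 j; rewrite v0 mul0r add0r => /eqP.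
  rewrite !mulf_eq0 (gt_eqF sqrtN_gt0) (gt_eqF (E0_gt0 j)) /= => /eqP vEj.
  by rewrite -[RHS]vEj.
by rewrite -[v]mulmx1 -(E_orth : E *m E^T = 1%:M) mulmxA vE0 mul0mx.
Qed.

Lemma opN_hcomp_eq0 h s x i :
  Sigmamx E N h s x \in unitmx -> opN (bN E N h s x) (cN E N h s x) (hcomp h i) s x = 0.
Proof.
move=> S_unit; rewrite /opN /bN /cN /cbN /gradN /oneN.
have := mulmxKV S_unit (\row_i (dtN N (hcomp h i) s x + 2^-1 * lapN E N (hcomp h i) s x)).
move: (_ *m invmx _) => cb /(congr1 (fun A : 'rV_n.+1 => A 0 i)).
under eq_bigr => k _ do rewrite !mxE.
rewrite mxE big_ord_recl /Sigmamx.
rewrite [in X in X -> _]mxE [in X in _ = X -> _]mxE /= => <-.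
rewrite (eq_bigr (fun k => cb 0 (lift ord0 k) * dN E N (lift ord0 k) (hcomp h i) s x)).
  by rewrite addrK subrr.
by move=> k _; rewrite mxE.
Qed.

Section Step.
Variables (h : R -> 'rV[R]_n -> 'rV[R]_n.+1) (t : R) (x : 'rV[R]_n) (q : 'rV[R]_n.+1).
Let s := t + N%:R^-1.
Let H := Hmx E N h s x.
Hypotheses (H_unit : H \in unitmx) (hq : h t x = q *m H) (q_gt0 : forall i, 0 < q 0 i).

Lemma stencil_weight_scale j :
  stencil_weight (bN E N h s x) j = (N%:R + cN E N h s x) * q 0 j.
Proof.
set b := bN E N h s x; set c := cN E N h s x.
have S_unit : Sigmamx E N h s x \in unitmx.
  by rewrite (Sigmamx_factor hq) unitmx_mul sigma_left_factor_unit.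
pose w := \row_j stencil_weight b j.
have wH : w *m H = ((N%:R + c) *: q) *m H.
  rewrite -scalemxAl -hq; apply/rowP => i; rewrite !mxE.
  have := opN_stencil b c (hcomp h i) t x.
  rewrite opN_hcomp_eq0 // => /esym/eqP; rewrite subr_eq0 => /eqP <-.
  by apply: eq_bigr => k _; rewrite !mxE.
have := congr1 (mulmx^~ (invmx H)) wH; rewrite !mulmxK // => /rowP/(_ j).
by rewrite !mxE.
Qed.

Lemma scheme_step (u g : R -> 'rV[R]_n -> R) :
  opN (bN E N h s x) (cN E N h s x) u s x = g s x ->
  u t x = \sum_j q 0 j * u s (shiftN E N x j) - (\sum_j q 0 j) * (g s x / N%:R).
Proof.
set b := bN E N h s x; set K := N%:R + cN E N h s x; set A := \sum_j q 0 j.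
have KA : K * A = N%:R.
  rewrite -[RHS](sum_stencil_weight b) mulr_sumr.
  by apply: eq_bigr => j _; rewrite stencil_weight_scale.
have AK : A / N%:R * K = 1.
  by rewrite mulrAC (mulrC A) KA mulfV // pnatr_eq0 -lt0n.
rewrite /s opN_stencil // -/s => <-.
have -> : \sum_j stencil_weight b j * u s (shiftN E N x j)
    = K * \sum_j q 0 j * u s (shiftN E N x j).
  by rewrite mulr_sumr; apply: eq_bigr => j _; rewrite stencil_weight_scale mulrA.
by rewrite -mulrBr mulrA mulrAC mulrA AK mul1r opprB addrC subrK.
Qed.
End Step.

Lemma scheme_norm_le h u g t x (B G : R) :
  let s := t + N%:R^-1 in
  let H := Hmx E N h s x in
  let q := h t x *m invmx H in
  H \in unitmx -> (forall i, 0 < q 0 i) -> \sum_i q 0 i <= 1 ->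
  opN (bN E N h s x) (cN E N h s x) u s x = g s x ->
  (forall y, `|u s y| <= B) -> `|g s x| <= G ->
  `|u t x| <= B + G / N%:R.
Proof.
move=> s H q H_unit q_gt0 q_le1 ueq u_le g_le.
rewrite (scheme_step H_unit (esym (mulmxKV H_unit _)) q_gt0 ueq).
apply: normr_substochastic_le => // [j | ]; first exact: ltW.
by rewrite normrM normfV normr_nat ler_pM2r ?invr_gt0 ?ltr0n.
Qed.
End Positivity.
End Stencil.

Theorem mainTheorem8 (R : realType) (n : nat) (E : 'M[R]_(n.+1))
  (N : nat) (T : R) (h : R -> 'rV[R]_n -> 'rV[R]_(n.+1))
  (Psi : 'rV[R]_n -> R) (g u : R -> 'rV[R]_n -> R) :
  (0 < n)%N ->
  orthogonal_mx E ->
  (forall j, 0 < E ord0 j) ->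
  (0 < N)%N ->
  (forall t x, on_grid N t -> 0 <= t -> t < TN N T ->
     Hmx E N h (t + N%:R^-1) x \in unitmx
     /\ (forall i, 0 < (h t x *m invmx (Hmx E N h (t + N%:R^-1) x)) 0 i)
     /\ \sum_(i < n.+1) (h t x *m invmx (Hmx E N h (t + N%:R^-1) x)) 0 i < 1) ->
  (exists M, forall y, `|Psi y| <= M) ->
  (exists M, forall s y, on_grid N s -> 0 < s -> s <= TN N T -> `|g s y| <= M) ->
  (forall x, u (TN N T) x = Psi x) ->
  (forall t x, on_grid N t -> 0 < t -> t <= TN N T ->
     dtN N u t x + 2^-1 * lapN E N u t x
     - \sum_(i < n) bN E N h t x 0 i * gradN E N u t x 0 i
     - cN E N h t x * oneN N u t x = g t x) ->
  forall t, on_grid N t -> 0 <= t -> t <= TN N T ->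
    sup [set `|u t x| | x in [set: 'rV[R]_n]]
    <= sup [set `|Psi y| | y in [set: 'rV[R]_n]]
       + (TN N T - t) *
         sup [set `|g p.1 p.2| | p in [set p : R * 'rV[R]_n |
                                    on_grid N p.1 /\ t < p.1 /\ p.1 <= TN N T]].
Proof.
move=> _ E_orth E0_gt0 N_gt0 H_ok [MP Psi_le] [MG g_le] uT ueq _ [k0 ->] t0_ge0 t0_le.
have [K TN_K] := TN_on_grid N_gt0 (le_trans t0_ge0 t0_le).
have k0_le_K : (k0 <= K)%N by move: t0_le; rewrite TN_K ler_grid.
set SP := sup [set `|Psi y| | y in _]; set G0 := sup [set `|g p.1 p.2| | p in _].
have Psi_sup y : `|Psi y| <= SP.
  by apply: ub_le_sup; [exists MP => _ [z _ <-] | exists y].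
have g_sup k y : (k0 < k <= K)%N -> `|g (k%:R / N%:R) y| <= G0.
  move=> /andP[k0_lt_k k_le_K]; apply: ub_le_sup.
    exists MG => _ [[s z] [s_grid [t0_lt_s s_le]] <-].
    by apply: g_le => //; apply: le_lt_trans t0_lt_s.
  by exists (k%:R / N%:R, y); rewrite //= ltr_grid // TN_K ler_grid //; split => //; exists k.
apply: ge_sup => [|_ [x _ <-]]; first by exists `|u (k0%:R / N%:R) 0|, 0.
rewrite TN_K -mulrBl -natrB // mulrAC -mulrA.
apply: (backward_induction_le (V := fun k x => `|u (k%:R / N%:R) x|) (k0 := k0))
  => [y | k B /andP[k0_le_k k_lt_K] u_le {}x | ].
- by rewrite -TN_K uT Psi_sup.
- have k_grid : on_grid N (k%:R / N%:R : R) by exists k.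
  have k_ge0 : 0 <= k%:R / N%:R :> R by rewrite divr_ge0 ?ler0n.
  have k_lt : k%:R / N%:R < TN N T by rewrite TN_K ltr_grid.
  have [H_unit [q_gt0 q_lt1]] := H_ok _ x k_grid k_ge0 k_lt.
  apply: (scheme_norm_le E_orth E0_gt0 N_gt0 (g := g) H_unit q_gt0 (ltW q_lt1));
    rewrite grid_succ //.
  + apply: ueq; [by exists k.+1 | by rewrite divr_gt0 ?ltr0n | by rewrite TN_K ler_grid].
  + by apply: g_sup; rewrite ltnS k0_le_k.
- by rewrite leqnn.
Qed.
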